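(* Let $\Delta$ be a simplicial polytopal fan in $\mathbb{R}^d$ with ray generators $\mathbf{v}_1,\ldots,\mathbf{v}_n$, let $\{(\mathbf{u}^{(i)},y^{(i)})\}_{i=1}^m\subset\mathbb{R}^d\times\mathbb{R}$ be a data set, $U=(\mathbf{u}^{(1)},\ldots,\mathbf{u}^{(m)})^\mathsf{T}$ and $\mathbf{y}=(y^{(1)},\ldots,y^{(m)})^\mathsf{T}$. Then \[ \hat{P}^\Delta(U,\mathbf{y})=\operatorname{argmin}_{P(\mathbf{h})\in\mathcal{P}(\Delta)}\|A_U\mathbf{h}-\mathbf{y}\|. \] Equivalently, \[ \hat{P}^\Delta(U,\mathbf{y})=\mathcal{P}(\Delta)\cap\{\mathbf{h}\in\mathbb{R}^n\colon A_U\mathbf{h}=\hat{\mathbf{y}}\}, \] where $\hat{\mathbf{y}}\in A_U\mathcal{P}(\Delta)$ is the unique point of $A_U\mathcal{P}(\Delta)$ of minimal distance to $\mathbf{y}$. In particular, the solution set $\hat{P}^\Delta(U,\mathbf{y})$ is a non-empty polyhedron in $\mathbb{R}^n$.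
   Context: A fan is simplicial if every cone is generated by linearly independent vectors; it is polytopal if it is the normal fan of a polytope (so its support is $\mathbb{R}^d$). The support function of a convex body $P$ is $h_P(\mathbf{u})=\max_{\mathbf{x}\in P}\langle\mathbf{x},\mathbf{u}\rangle$. For $\mathbf{h}\in\mathbb{R}^n$ let $P(\mathbf{h})=\{\mathbf{x}\in\mathbb{R}^d\colon\langle\mathbf{x},\mathbf{v}_i\rangle\le h_i,\ i=1,\ldots,n\}$. The deformation cone $\mathcal{P}(\Delta)$ is the set of all polytopes whose normal fan is a coarsening of $\Delta$ (every cone of their normal fan is a union of cones of $\Delta$); such a polytope $P$ equals $P(\mathbf{h})$ for its support vector $\mathbf{h}=(h_P(\mathbf{v}_1),\ldots,h_P(\mathbf{v}_n))$, and via $P(\mathbf{h})\mapsto\mathbf{h}$ the set $\mathcal{P}(\Delta)$ is identified with a closed full-dimensional polyhedral cone in $\mathbb{R}^n$. For $\mathbf{u}\in\mathbb{R}^d$ let $\sigma$ be the unique cone of $\Delta$ with $\mathbf{u}$ in its relative interior, $I_\sigma$ the index set of its generators, and write $\mathbf{u}=\sum_{k\in I_\sigma}\lambda_k\mathbf{v}_k$; define $[\mathbf{u}]\in\mathbb{R}^n$ by $[\mathbf{u}]_i=\lambda_i$ for $i\in I_\sigma$ and $0$ otherwise. $A_U\in\mathbb{R}^{m\times n}$ is the matrix with rows $[\mathbf{u}^{(1)}]^\mathsf{T},\ldots,[\mathbf{u}^{(m)}]^\mathsf{T}$. The least-squares estimator is $\hat{P}^\Delta(U,\mathbf{y})=\operatorname{argmin}_{P\in\mathcal{P}(\Delta)}\frac1m\sum_{i=1}^m(h_P(\mathbf{u}^{(i)})-y^{(i)})^2$,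 regarded as a set of support vectors in $\mathbb{R}^n$. *)

From HB Require Import structures.
From mathcomp Require Import all_boot all_order all_algebra.
From mathcomp Require Import boolp classical_sets reals.
From Stdlib Require Import ClassicalEpsilon.

Set Implicit Arguments.
Unset Strict Implicit.
Unset Printing Implicit Defensive.

Import Order.TTheory GRing.Theory Num.Theory.
Local Open Scope ring_scope.
Local Open Scope classical_set_scope.

Section PolyFan.
Variables (R : realType) (d n : nat).

Definition dotv (x u : 'rV[R]_d) : R := \sum_(j < d) x 0 j * u 0 j.

Definition conv (pts : seq 'rV[R]_d) : set 'rV[R]_d :=
  [set x | exists lam : 'I_(size pts) -> R,
     (forall k, 0 <= lam k) /\ \sum_k lam k = 1 /\
     x = \sum_k lam k *: pts`_k].

Definition suppf (P : set 'rV[R]_d) (u : 'rV[R]_d) : R :=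
  sup [set dotv x u | x in P].

Definition normal_cone (P : set 'rV[R]_d) (x : 'rV[R]_d) : set 'rV[R]_d :=
  [set u | forall y, P y -> dotv y u <= dotv x u].

(** The normal fan of a polytope P, as a family of cones (one per point of P,
    i.e. the normal cones of the nonempty faces of P). *)
Definition normal_fan (P : set 'rV[R]_d) : set (set 'rV[R]_d) :=
  [set C | exists2 x, P x & C = normal_cone P x].

Variable v : 'I_n -> 'rV[R]_d.

Definition gcone (S : {set 'I_n}) : set 'rV[R]_d :=
  [set u | exists lam : 'I_n -> R,
     (forall i, 0 <= lam i) /\ (forall i, i \notin S -> lam i = 0) /\
     u = \sum_i lam i *: v i].

Definition lin_indep (S : {set 'I_n}) : Prop :=
  forall lam : 'I_n -> R, (forall i, i \notin S -> lam i = 0) ->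
    \sum_i lam i *: v i = 0 -> forall i, lam i = 0.

Definition face_of (C F : set 'rV[R]_d) : Prop :=
  exists w : 'rV[R]_d, (forall u, C u -> dotv w u <= 0) /\
                       F = C `&` [set u | dotv w u = 0].

(** Delta (a family of index sets S, standing for the cones gcone S) is a
    simplicial fan whose rays are exactly the distinct rays spanned by
    v_1, ..., v_n. *)
Definition simplicial_fan (Delta : {set {set 'I_n}}) : Prop :=
  [/\ (forall S, S \in Delta -> forall F, face_of (gcone S) F ->
          exists2 T, T \in Delta & F = gcone T),
      (forall S T, S \in Delta -> T \in Delta ->
          face_of (gcone S) (gcone S `&` gcone T) /\
          face_of (gcone T) (gcone S `&` gcone T)),
      (forall S, S \in Delta -> lin_indep S),
      (forall i, [set i]%SET \in Delta) &
      (forall i j, gcone [set i]%SET = gcone [set j]%SET -> i = j)].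

Definition polytopal (Delta : {set {set 'I_n}}) : Prop :=
  exists2 pts : seq 'rV[R]_d, pts != [::] &
    normal_fan (conv pts) = [set C | exists2 S, S \in Delta & C = gcone S].

Definition coarsens (Delta : {set {set 'I_n}}) (P : set 'rV[R]_d) : Prop :=
  forall C, normal_fan P C ->
    exists F : {set {set 'I_n}}, F \subset Delta /\
      C = [set u | exists2 S, S \in F & gcone S u].

(** Polytopes (given by a nonempty finite vertex list) in the deformation
    cone P(Delta). *)
Definition in_defcone (Delta : {set {set 'I_n}}) (pts : seq 'rV[R]_d) : Prop :=
  pts != [::] /\ coarsens Delta (conv pts).

Definition supvec (P : set 'rV[R]_d) : 'cV[R]_n := \col_i suppf P (v i).

(** The deformation cone, as a subset of R^n (via P |-> its support vector). *)
Definition defcone (Delta : {set {set 'I_n}}) : set 'cV[R]_n :=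
  [set supvec (conv pts) | pts in in_defcone Delta].

(** [u] : coefficient vector of u with respect to the generators of the unique
    cone of Delta containing u in its relative interior (for a simplicial
    cone, relative interior = strictly positive combinations). *)
Definition is_coords (Delta : {set {set 'I_n}}) (u : 'rV[R]_d)
  (lam : 'cV[R]_n) : Prop :=
  exists2 S, S \in Delta &
    [/\ forall i, i \in S -> 0 < lam i 0,
        forall i, i \notin S -> lam i 0 = 0 &
        u = \sum_i lam i 0 *: v i].

Definition coords (Delta : {set {set 'I_n}}) (u : 'rV[R]_d) : 'cV[R]_n :=
  epsilon (inhabits 0) (is_coords Delta u).

Definition AU (Delta : {set {set 'I_n}}) (m : nat) (U : 'I_m -> 'rV[R]_d)
  : 'M[R]_(m, n) := \matrix_(k, i) coords Delta (U k) i 0.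

Definition ls_obj (m : nat) (U : 'I_m -> 'rV[R]_d) (y : 'cV[R]_m)
  (P : set 'rV[R]_d) : R :=
  m%:R^-1 * \sum_k (suppf P (U k) - y k 0) ^+ 2.

Definition lse (Delta : {set {set 'I_n}}) (m : nat) (U : 'I_m -> 'rV[R]_d)
  (y : 'cV[R]_m) : set 'cV[R]_n :=
  [set h | exists pts, [/\ in_defcone Delta pts,
     h = supvec (conv pts) &
     forall pts', in_defcone Delta pts' ->
       ls_obj U y (conv pts) <= ls_obj U y (conv pts')]].

End PolyFan.

Definition enorm (R : realType) (m : nat) (w : 'cV[R]_m) : R :=
  Num.sqrt (\sum_k w k 0 ^+ 2).

Definition polyhedron (R : realType) (n : nat) (Q : set 'cV[R]_n) : Prop :=
  exists (k : nat) (C : 'M[R]_(k, n)) (b : 'cV[R]_k),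
    Q = [set h | forall r, (C *m h) r 0 <= b r 0].

(* The support function of a polytope whose normal fan coarsens Delta is
   linear on every cone of Delta, so h_P(u) = <[u], h> and the least-squares
   objective is (1/m) |A_U h - y|^2.  The deformation cone is a polyhedral
   cone: for each spanning cone S of Delta, the point x_S with <x_S, v_i> = h_i
   (i in S) must satisfy <x_S, v_j> <= h_j for all j, and conversely these x_S
   are the vertices of a polytope with support vector h.  A convex quadratic
   attains its minimum on a polyhedral cone (induction on the active
   constraints), the image A_U h of a minimiser is unique by the
   parallelogram law, and the minimisers form the fibre of that image. *)

From HB Require Import structures.
From mathcomp Require Import all_boot all_order all_algebra.
From mathcomp Require Import boolp classical_sets reals.
From mathcomp Require Import ring lra zify.
From Stdlib Require Import ClassicalEpsilon.

Set Implicit Arguments.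
Unset Strict Implicit.
Unset Printing Implicit Defensive.
Import Order.TTheory GRing.Theory Num.Theory.
Local Open Scope ring_scope.
Local Open Scope classical_set_scope.

Section InnerProduct.
Variables (R : realType) (d : nat).
Implicit Types x y u w : 'rV[R]_d.

Lemma dotvC x u : dotv x u = dotv u x.
Proof. by apply: eq_bigr => j _; rewrite mulrC. Qed.

Lemma dotvDl x y u : dotv (x + y) u = dotv x u + dotv y u.
Proof. by rewrite /dotv -big_split; apply: eq_bigr => j _; rewrite mxE mulrDl. Qed.

Lemma dotvZl (a : R) x u : dotv (a *: x) u = a * dotv x u.
Proof. by rewrite /dotv mulr_sumr; apply: eq_bigr => j _; rewrite mxE mulrA. Qed.

Lemma dotvBl x y u : dotv (x - y) u = dotv x u - dotv y u.
Proof. by rewrite dotvDl -scaleN1r dotvZl mulN1r. Qed.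

Lemma dotv_suml (I : finType) (F : I -> 'rV[R]_d) u :
  dotv (\sum_i F i) u = \sum_i dotv (F i) u.
Proof.
rewrite /dotv; under eq_bigr do rewrite summxE mulr_suml.
by rewrite exchange_big.
Qed.

Lemma dotvDr x u w : dotv x (u + w) = dotv x u + dotv x w.
Proof. by rewrite dotvC dotvDl !(dotvC x). Qed.

Lemma dotvZr (a : R) x u : dotv x (a *: u) = a * dotv x u.
Proof. by rewrite dotvC dotvZl dotvC. Qed.

Lemma dotvBr x u w : dotv x (u - w) = dotv x u - dotv x w.
Proof. by rewrite dotvC dotvBl !(dotvC x). Qed.

Lemma dotv_sumr (I : finType) (F : I -> 'rV[R]_d) x :
  dotv x (\sum_i F i) = \sum_i dotv x (F i).
Proof. by rewrite dotvC dotv_suml; apply: eq_bigr => i _; rewrite dotvC. Qed.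

Lemma dotv_comb (I : finType) (lam : I -> R) (F : I -> 'rV[R]_d) x :
  dotv x (\sum_i lam i *: F i) = \sum_i lam i * dotv x (F i).
Proof. by rewrite dotv_sumr; apply: eq_bigr => i _; rewrite dotvZr. Qed.

Lemma dotvv_ge0 x : 0 <= dotv x x.
Proof. by apply: sumr_ge0 => j _; rewrite -expr2 sqr_ge0. Qed.

Lemma dotvv_eq0 x : (dotv x x == 0) = (x == 0).
Proof.
apply/idP/eqP => [|->]; last by rewrite /dotv big1 // => j _; rewrite mxE mul0r.
rewrite psumr_eq0 => [/allP x0|j _]; last by rewrite -expr2 sqr_ge0.
apply/rowP => j; rewrite mxE.
by have /= := x0 j (mem_index_enum j); rewrite mulf_eq0 orbb => /eqP.
Qed.

Lemma dotvE x u : dotv x u = (x *m u^T) 0 0.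
Proof. by rewrite mxE; apply: eq_bigr => j _; rewrite mxE. Qed.

End InnerProduct.

Section LeastSquares.
Variable R : realType.

Definition sqnorm m (w : 'cV[R]_m) : R := \sum_k w k 0 ^+ 2.

Lemma sqnorm_ge0 m (w : 'cV[R]_m) : 0 <= sqnorm w.
Proof. by apply: sumr_ge0 => k _; rewrite sqr_ge0. Qed.

Lemma sqnorm_eq0 m (w : 'cV[R]_m) : (sqnorm w == 0) = (w == 0).
Proof.
apply/idP/eqP => [|->]; last by rewrite /sqnorm big1 // => k _; rewrite mxE expr0n.
rewrite psumr_eq0 => [/allP w0|k _]; last by rewrite sqr_ge0.
apply/matrixP => i j; rewrite mxE (ord1 j).
by have /= := w0 i (mem_index_enum i); rewrite sqrf_eq0 => /eqP.
Qed.

Lemma ler_enorm m (a b : 'cV[R]_m) : (enorm a <= enorm b) = (sqnorm a <= sqnorm b).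
Proof. by rewrite /enorm ler_sqrt // sqnorm_ge0. Qed.

Lemma sqnormD m (a b : 'cV[R]_m) :
  sqnorm (a + b) = sqnorm a + sqnorm b + 2 * (a^T *m b) 0 0.
Proof.
rewrite /sqnorm mxE mulr_sumr -!big_split; apply: eq_bigr => k _ /=.
by rewrite !mxE; ring.
Qed.

Lemma sqnormZ m (c : R) (a : 'cV[R]_m) : sqnorm (c *: a) = c ^+ 2 * sqnorm a.
Proof. by rewrite /sqnorm mulr_sumr; apply: eq_bigr => k _; rewrite mxE exprMn. Qed.

Lemma sqnorm_convex m (t : R) (a b : 'cV[R]_m) : 0 <= t <= 1 ->
  sqnorm ((1 - t) *: a + t *: b) <= (1 - t) * sqnorm a + t * sqnorm b.
Proof.
move=> /andP[t0 t1]; rewrite /sqnorm !mulr_sumr -big_split.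
apply: ler_sum => k _ /=; rewrite !mxE -subr_ge0.
have -> : (1 - t) * a k 0 ^+ 2 + t * b k 0 ^+ 2 - ((1 - t) * a k 0 + t * b k 0) ^+ 2
   = t * (1 - t) * (a k 0 - b k 0) ^+ 2 by ring.
by rewrite mulr_ge0 ?sqr_ge0 // mulr_ge0 // subr_ge0.
Qed.

Lemma sqnorm_parallelogram m (a b : 'cV[R]_m) :
  sqnorm (a + b) + sqnorm (a - b) = 2 * sqnorm a + 2 * sqnorm b.
Proof.
have sqnormN : sqnorm (- b) = sqnorm b.
  by apply: eq_bigr => i _; rewrite mxE sqrrN.
rewrite !sqnormD sqnormN mulmxN.
have -> : (- (a^T *m b)) 0 0 = - (a^T *m b) 0 0 by rewrite mxE.
ring.
Qed.

Lemma mulmx_tr_eq0 p m (X : 'M[R]_(p, m)) : X *m X^T = 0 -> X = 0.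
Proof.
move=> /matrixP XXt0; apply/matrixP => i j; rewrite mxE.
have := XXt0 i i; rewrite !mxE; under eq_bigr do rewrite mxE.
move=> /eqP; rewrite psumr_eq0 => [|k _]; last by rewrite -expr2 sqr_ge0.
by move=> /allP /(_ j (mem_index_enum j)); rewrite /= mulf_eq0 orbb => /eqP.
Qed.

Lemma normal_equations_solvable m p (M : 'M[R]_(m, p)) (y : 'cV[R]_m) :
  exists z, (M^T *m M) *m z = M^T *m y.
Proof.
set N := M^T *m M.
have NM : (N <= M)%MS by apply: submxMl.
have kerN : (kermx N <= kermx M^T)%MS.
  rewrite sub_kermx; apply/eqP/mulmx_tr_eq0.
  by rewrite trmx_mul trmxK mulmxA -(mulmxA _ _ M) mulmx_ker mul0mx.
have MN : (M <= N)%MS.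
  have rankNM : \rank N = \rank M.
    apply/anti_leq; rewrite mxrankS //=; have := mxrankS kerN.
    rewrite !mxrank_ker mxrank_tr; have := rank_leq_row N; have := rank_leq_col M.
    lia.
  by have /andP[] : (N == M)%MS by rewrite -(mxrank_leqif_eq NM).2 rankNM.
have /submxP[D DE] : (y^T *m M <= N)%MS by apply: submx_trans (submxMl _ _) MN.
exists D^T; have NT : N^T = N by rewrite trmx_mul trmxK.
by rewrite -NT -trmx_mul -DE trmx_mul trmxK.
Qed.

Lemma lsq_min_exists m p (M : 'M[R]_(m, p)) (y : 'cV[R]_m) :
  exists z, forall z', sqnorm (M *m z - y) <= sqnorm (M *m z' - y).
Proof.
have [z Nz] := normal_equations_solvable M y; exists z => z'.
have -> : M *m z' - y = (M *m z - y) + M *m (z' - z).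
  by rewrite mulmxBr addrCA addrAC subrr add0r.
rewrite [X in _ <= X]sqnormD.
have -> : (M *m z - y)^T *m (M *m (z' - z)) = (M^T *m (M *m z - y))^T *m (z' - z).
  by rewrite trmx_mul trmxK mulmxA.
rewrite (mulmxBr M^T) mulmxA Nz subrr trmx0 mul0mx mxE mulr0 addr0.
by rewrite lerDl sqnorm_ge0.
Qed.

Lemma lsq_min_on_kernel k p m (G : 'M[R]_(k, p)) (A : 'M[R]_(m, p)) (y : 'cV[R]_m) :
  exists2 h, G *m h = 0 &
    forall h', G *m h' = 0 -> sqnorm (A *m h - y) <= sqnorm (A *m h' - y).
Proof.
set K := (kermx G^T)^T.
have GK z : G *m (K *m z) = 0.
  by rewrite mulmxA -[G]trmxK -trmx_mul mulmx_ker trmx0 mul0mx.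
have [z zmin] := lsq_min_exists (A *m K) y.
exists (K *m z) => // h' Gh'.
have /submxP[D hD] : (h'^T <= kermx G^T)%MS by rewrite sub_kermx -trmx_mul Gh' trmx0.
have -> : h' = K *m D^T by rewrite -trmx_mul -hD trmxK.
by rewrite !mulmxA.
Qed.

Section ConeMinimum.
Variables (k p m : nat) (C : 'M[R]_(k, p)) (A : 'M[R]_(m, p)) (y : 'cV[R]_m).

Local Notation f h := (sqnorm (A *m h - y)).
Local Notation feasible h := (forall r, (C *m h) r 0 <= 0).
Local Notation tight J h := (forall r, r \in J -> (C *m h) r 0 = 0).

Lemma tight_min_exists (J : {set 'I_k}) :
  exists2 h, tight J h & forall h', tight J h' -> f h <= f h'.
Proof.
set G := \matrix_(r, i) (if r \in J then C r i else 0).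
have GE (h : 'cV_p) r : (G *m h) r 0 = if r \in J then (C *m h) r 0 else 0.
  rewrite !mxE; case: ifP => rJ; first by apply: eq_bigr => i _; rewrite mxE rJ.
  by rewrite big1 // => i _; rewrite mxE rJ mul0r.
have tightE (h : 'cV_p) : G *m h = 0 <-> tight J h.
  split=> [Gh0 r rJ|hJ]; first by have := GE h r; rewrite Gh0 rJ mxE => <-.
  apply/matrixP => r j; rewrite (ord1 j) GE [RHS]mxE; case: ifP => // rJ.
  exact: hJ.
have [h /tightE hJ hmin] := lsq_min_on_kernel G A y.
by exists h => // h' /tightE; apply: hmin.
Qed.

Lemma lsq_convex h h' t : 0 <= t <= 1 ->
  f ((1 - t) *: h + t *: h') <= (1 - t) * f h + t * f h'.
Proof.
have -> : A *m ((1 - t) *: h + t *: h') - y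
        = (1 - t) *: (A *m h - y) + t *: (A *m h' - y).
  by rewrite mulmxDr -!scalemxAr !scalerBr addrACA -opprD -scalerDl subrK scale1r.
exact: sqnorm_convex.
Qed.

(* Walking from a feasible [h] towards [hs], the first constraint to become
   active is the one minimising [a r / (a r - b r)] over the violated ones. *)
Lemma segment_exit (J : {set 'I_k}) (h hs : 'cV[R]_p) r0 :
  feasible h -> tight J h -> tight J hs -> 0 < (C *m hs) r0 0 ->
  exists t r, [/\ 0 <= t <= 1, (C *m hs) r 0 > 0,
    feasible ((1 - t) *: h + t *: hs) & tight (r |: J) ((1 - t) *: h + t *: hs)].
Proof.
move=> hC hJ hsJ hsr0.
pose a r := (C *m h) r 0; pose b r := (C *m hs) r 0.
pose tr r := a r / (a r - b r).
have [r /= br rmin] := @arg_minP _ _ _ r0 [pred r | 0 < b r] tr hsr0.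
have ab_lt0 r' : 0 < b r' -> a r' - b r' < 0 by have := hC r'; rewrite -/(a r'); lra.
have tr_a r' : 0 < b r' -> tr r' * (a r' - b r') = a r'.
  by move=> br'; rewrite mulfVK // lt_eqF // ab_lt0.
have Cseg r' :
    (C *m ((1 - tr r) *: h + tr r *: hs)) r' 0 = (1 - tr r) * a r' + tr r * b r'.
  by rewrite /a /b mulmxDr -!scalemxAr !mxE.
have tr0 : 0 <= tr r by rewrite ler_ndivlMr ?ab_lt0 // mul0r; apply: hC.
have tr1 : tr r <= 1.
  by rewrite ler_ndivrMr ?ab_lt0 // mul1r; have := hC r; rewrite -/(a r); lra.
exists (tr r), r; split => //; first by rewrite tr0.
- move=> r'; rewrite Cseg; case: (ltrP 0 (b r')) => br'.
    have := ler_wnM2r (ltW (ab_lt0 r' br')) (rmin r' br').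
    by have := tr_a r' br'; lra.
  by have := hC r'; rewrite -/(a r'); nra.
- move=> r'; rewrite in_setU1 => /orP[/eqP ->|r'J]; rewrite Cseg.
    by have := tr_a r br; lra.
  by rewrite /a /b hJ // hsJ // !mulr0 addr0.
Qed.

(* Induction on the number of inactive constraints: either the minimiser over
   the subspace [tight J] is feasible, or the minimum is attained on a facet
   reached by [segment_exit]. *)
Lemma face_min_exists N (J : {set 'I_k}) : (#|~: J| < N)%N ->
  exists2 h, feasible h /\ tight J h &
    forall h', feasible h' -> tight J h' -> f h <= f h'.
Proof.
elim: N J => [//|N IH] J cardJ.
have [hs hsJ hsmin] := tight_min_exists J.
have [hsC|/existsNP[r0 /negP]] := pselect (feasible hs).
  by exists hs => // h' _; apply: hsmin.
rewrite -ltNge => hsr0.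
have r0J : r0 \notin J by apply/negP => /hsJ hsr0_eq; rewrite hsr0_eq ltxx in hsr0.
have IHr r : exists g, r \notin J ->
    (feasible g /\ tight (r |: J) g) /\
    forall h', feasible h' -> tight (r |: J) h' -> f g <= f h'.
  have [rJ|] := boolP (r \notin J); last by exists 0.
  have /IH[g gJ gmin] : (#|~: (r |: J)| < N)%N.
    have /proper_card : ~: (r |: J) \proper ~: J.
      rewrite properC properE finset.subsetU1 /=.
      by rewrite finset.subUset finset.sub1set (negbTE rJ).
    lia.
  by exists g.
have [g gmin] := @choice _ _ _ IHr.
have [r1 r1J r1min] := @arg_minP _ _ _ r0 [pred r | r \notin J] (fun r => f (g r)) r0J.
have [[g1C g1J] g1min] := gmin r1 r1J.
exists (g r1); first by split=> // r rJ; apply: g1J; rewrite in_setU1 rJ orbT.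
move=> h hC hJ.
have [t [r [/andP[t0 t1] hsr htC htJ]]] := segment_exit hC hJ hsJ hsr0.
have rJ : r \notin J by apply/negP => /hsJ hsr_eq; rewrite hsr_eq ltxx in hsr.
have le_g := r1min r rJ.
have le_ht := (gmin r rJ).2 _ htC htJ.
have le_conv := lsq_convex h hs (introT andP (conj t0 t1)).
have := ler_wpM2l t0 (hsmin h hJ).
lra.
Qed.

Lemma cone_lsq_min_exists :
  exists2 h, feasible h & forall h', feasible h' -> f h <= f h'.
Proof.
have [h [hC _] hmin] := @face_min_exists #|~: finset.set0|.+1 finset.set0 (ltnSn _).
by exists h => // h' h'C; apply: hmin => // r; rewrite finset.in_set0.
Qed.

End ConeMinimum.
End LeastSquares.

Section Polyhedra.
Variable R : realType.

Lemma lsq_min_image_unique n m (A : 'M[R]_(m, n)) (y : 'cV[R]_m)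
    (D : set 'cV[R]_n) h1 h2 :
  (forall g1 g2, D g1 -> D g2 -> D (2^-1 *: (g1 + g2))) -> D h1 -> D h2 ->
  (forall h, D h -> sqnorm (A *m h1 - y) <= sqnorm (A *m h - y)) ->
  (forall h, D h -> sqnorm (A *m h2 - y) <= sqnorm (A *m h - y)) ->
  A *m h1 = A *m h2.
Proof.
move=> Dmid Dh1 Dh2 h1min h2min.
set a := A *m h1 - y; set b := A *m h2 - y.
have ab : sqnorm a = sqnorm b by apply/eqP; rewrite eq_le h1min // h2min.
have := h1min _ (Dmid _ _ Dh1 Dh2).
have -> : A *m (2^-1 *: (h1 + h2)) - y = 2^-1 *: (a + b).
  by rewrite -scalemxAr mulmxDr; apply/matrixP => i j; rewrite !mxE; field.
rewrite sqnormZ expr2 => mid_ge.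
have : sqnorm (a - b) <= 0 by have := sqnorm_parallelogram a b; lra.
rewrite le_eqVlt ltNge sqnorm_ge0 orbF sqnorm_eq0 subr_eq0 => /eqP.
exact: addIr.
Qed.

Lemma col_mx_le m1 m2 (X X' : 'cV[R]_m1) (Y Y' : 'cV[R]_m2) :
  (forall r, col_mx X Y r 0 <= col_mx X' Y' r 0) <->
  (forall r, X r 0 <= X' r 0) /\ (forall r, Y r 0 <= Y' r 0).
Proof.
split=> [XY|[XX' YY'] r].
  by split=> r; [have := XY (lshift m2 r) | have := XY (rshift m1 r)];
    rewrite ?col_mxEu ?col_mxEd.
by rewrite !mxE; case: (split r) => j.
Qed.

Lemma polyhedron_cone_fibre n m k (C : 'M[R]_(k, n)) (A : 'M[R]_(m, n))
    (z : 'cV[R]_m) :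
  polyhedron ([set h | forall r, (C *m h) r 0 <= 0] `&` [set h | A *m h = z]).
Proof.
exists (k + (m + m))%N, (col_mx C (col_mx A (- A))), (col_mx 0 (col_mx z (- z))).
apply/seteqP; split=> h /=; rewrite !mul_col_mx mulNmx.
  move=> [hC ->]; apply/col_mx_le; split=> [r|]; first by rewrite [X in _ <= X]mxE hC.
  by apply/col_mx_le; split=> r.
move=> /col_mx_le[hC /col_mx_le[Ahz zAh]]; split=> [r|].
  by have := hC r; rewrite [X in _ <= X]mxE.
apply/matrixP => r j; rewrite (ord1 j); apply/eqP; rewrite eq_le Ahz /=.
by have := zAh r; rewrite !mxE lerN2.
Qed.

End Polyhedra.

Section Polytopes.
Variables (R : realType) (d : nat).
Implicit Types (pts : seq 'rV[R]_d) (p q u g : 'rV[R]_d).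

Lemma conv_mem pts p : p \in pts -> conv pts p.
Proof.
move=> pin; rewrite -(nth_index 0 pin).
have ipts : (index p pts < size pts)%N by rewrite index_mem.
set k := Ordinal ipts.
exists (fun i => (i == k)%:R); split=> [i|]; first by rewrite ler0n.
split; first by rewrite (bigD1 k) //= eqxx big1 ?addr0 // => i /negbTE ->.
rewrite (bigD1 k) //= eqxx scale1r big1 ?addr0 // => i /negbTE ->.
by rewrite scale0r.
Qed.

Lemma conv_le pts y g c : conv pts y ->
  (forall q, q \in pts -> dotv q g <= c) -> dotv y g <= c.
Proof.
move=> [lam [lam0 [lam1 ->]]] ptsc; rewrite dotv_suml.
rewrite -[c]mul1r -lam1 mulr_suml; apply: ler_sum => k _.
by rewrite dotvZl ler_wpM2l // ptsc // mem_nth.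
Qed.

Lemma normal_cone_conv pts p g :
  (forall q, q \in pts -> dotv q g <= dotv p g) -> normal_cone (conv pts) p g.
Proof. by move=> pmax y /conv_le; apply. Qed.

Lemma seq_argmax (T : eqType) (s : seq T) (F : T -> R) (t0 : T) : t0 \in s ->
  exists2 t, t \in s & forall t', t' \in s -> F t' <= F t.
Proof.
elim: s t0 => [//|x [|y s] IH] t0 _.
  by exists x; rewrite ?mem_head // => q; rewrite mem_seq1 => /eqP ->.
have [p ps pmax] := IH y (mem_head _ _).
have [Fxp|Fpx] := leP (F x) (F p).
  by exists p => [|q]; rewrite in_cons ?ps ?orbT // => /orP[/eqP ->|/pmax].
exists x => [|q]; first exact: mem_head.
by rewrite in_cons => /orP[/eqP ->//|/pmax Fqp]; apply: le_trans Fqp (ltW Fpx).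
Qed.

Lemma conv_maximizer pts u : pts != [::] ->
  exists2 x, conv pts x & normal_cone (conv pts) x u.
Proof.
case: pts => // x0 s _.
have [p pin pmax] := seq_argmax (fun q => dotv q u) (mem_head x0 s).
by exists p; [apply: conv_mem | apply: normal_cone_conv].
Qed.

Lemma suppf_normal (P : set 'rV[R]_d) x u :
  P x -> normal_cone P x u -> suppf P u = dotv x u.
Proof.
move=> Px xmax; have ub : ubound [set dotv y u | y in P] (dotv x u).
  by move=> r [y Py <-]; apply: xmax.
apply/eqP; rewrite eq_le ge_sup //=; last by exists (dotv x u), x.
by apply: ub_le_sup; [exists (dotv x u) | exists x].
Qed.

Lemma suppf_ge pts y u : pts != [::] -> conv pts y -> dotv y u <= suppf (conv pts) u.
Proof.
move=> pts0 cy; have [x cx xmax] := conv_maximizer u pts0.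
by rewrite (suppf_normal cx xmax); apply: xmax.
Qed.

Lemma pos_perturb1 (a b : R) : 0 <= a -> (a = 0 -> 0 < b) ->
  exists2 e, 0 < e & forall e', 0 < e' <= e -> 0 < a + e' * b.
Proof.
move=> a0 ab; have [a_eq0|a_gt0] := eqVneq a 0.
  by exists 1 => // e' /andP[e'0 _]; rewrite a_eq0 add0r mulr_gt0 // ab.
have {}a_gt0 : 0 < a by rewrite lt_def a_gt0.
have b1 : 0 < `|b| + 1 by have := normr_ge0 b; lra.
exists (a / (`|b| + 1)) => [|e' /andP[e'0]]; first by rewrite divr_gt0.
rewrite ler_pdivlMr // => e'b.
have : - (e' * b) <= e' * `|b| by rewrite -mulrN ler_pM2l // -normrN ler_norm.
nra.
Qed.

Lemma pos_perturb (T : eqType) (s : seq T) (a b : T -> R) :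
  (forall x, x \in s -> 0 <= a x /\ (a x = 0 -> 0 < b x)) ->
  exists2 e, 0 < e & forall e', 0 < e' <= e -> forall x, x \in s -> 0 < a x + e' * b x.
Proof.
elim: s => [|x s IH] abs; first by exists 1.
have [ax bx] := abs x (mem_head x s).
have [ex ex0 exP] := pos_perturb1 ax bx.
have [es es0 esP] := IH (fun y ys => abs y ltac:(by rewrite in_cons ys orbT)).
exists (Num.min ex es) => [|e' /andP[e'0]]; first by rewrite lt_min ex0 es0.
rewrite le_min => /andP[e'x e's] y; rewrite in_cons => /orP[/eqP ->|ys].
  by apply: exP; rewrite e'0.
by apply: esP; rewrite ?e'0.
Qed.

(* Among the maximisers of [u], one of largest norm is a vertex, and [g] is a
   direction exposing it: [2 <p - q, p> = |p - q|^2 + |p|^2 - |q|^2 > 0]. *)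
Lemma strict_maximizer pts u : pts != [::] ->
  exists p g, [/\ p \in pts, forall q, q \in pts -> dotv q u <= dotv p u
            & forall q, q \in pts -> q != p -> dotv q g < dotv p g].
Proof.
case: pts => // x0 s _; set pts := x0 :: s.
have [p1 p1in p1max] :
    exists2 p1, p1 \in pts & forall q, q \in pts -> dotv q u <= dotv p1 u.
  exact: seq_argmax (mem_head x0 s).
pose top := [seq q <- pts | dotv q u == dotv p1 u].
have p1top : p1 \in top by rewrite mem_filter eqxx p1in.
have [p ptop pmax] : exists2 p, p \in top & forall q, q \in top -> dotv q q <= dotv p p.
  exact: seq_argmax p1top.
move: ptop; rewrite mem_filter => /andP[/eqP pu pin].
have [|e e0 eP] := @pos_perturb _ [seq q <- pts | q != p]
   (fun q => dotv (p - q) u) (fun q => dotv (p - q) p).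
  move=> q; rewrite mem_filter => /andP[qp qin] /=; rewrite dotvBl subr_ge0 pu.
  split=> [|/eqP]; first exact: p1max.
  rewrite subr_eq0 => /eqP qu; have /pmax /= qp_norm : q \in top.
    by rewrite mem_filter -qu eqxx.
  have : 0 < dotv (p - q) (p - q).
    by rewrite lt_def dotvv_ge0 dotvv_eq0 subr_eq0 eq_sym qp.
  rewrite !dotvBl !dotvBr (dotvC q p); lra.
exists p, (u + e *: p); split=> // [q /p1max|q qin qp]; first by rewrite pu.
have := eP e; rewrite e0 lexx => /(_ isT q); rewrite mem_filter qp qin => /(_ isT).
by rewrite -dotvZr -dotvDr dotvBl subr_gt0.
Qed.

Lemma normal_cone_perturb pts p g z : p \in pts ->
  (forall q, q \in pts -> q != p -> dotv q g < dotv p g) ->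
  exists2 e, 0 < e & normal_cone (conv pts) p (g + e *: z).
Proof.
move=> pin pmax; have [|e e0 eP] := @pos_perturb _ [seq q <- pts | q != p]
   (fun q => dotv (p - q) g) (fun q => dotv (p - q) z).
  move=> q; rewrite mem_filter => /andP[qp qin].
  have gq : 0 < dotv (p - q) g by rewrite dotvBl subr_gt0 pmax.
  by split=> [|gq0] /=; [exact: ltW | rewrite gq0 ltxx in gq].
exists e => //; apply: normal_cone_conv => q qin; have [->//|qp] := eqVneq q p.
have := eP e; rewrite e0 lexx => /(_ isT q); rewrite mem_filter qp qin => /(_ isT).
by rewrite -dotvZr -dotvDr dotvBl subr_gt0 => /ltW.
Qed.

End Polytopes.

Lemma sum_scale_supp1 (R : pzRingType) (V : lmodType R) (I : finType)
    (lam : I -> R) (F : I -> V) i :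
  (forall j, j != i -> lam j = 0) -> \sum_j lam j *: F j = lam i *: F i.
Proof.
by move=> lam0; rewrite (bigD1 i) //= big1 ?addr0 // => j /lam0 ->; rewrite scale0r.
Qed.

Section Cones.
Variables (R : realType) (d n : nat) (v : 'I_n -> 'rV[R]_d).
Implicit Types (S T : {set 'I_n}) (lam : 'I_n -> R).

Lemma gcone1P i u : gcone v [set i] u <-> exists2 mu : R, 0 <= mu & u = mu *: v i.
Proof.
split=> [[lam [lam0 [lamS ->]]]|[mu mu0 ->]].
  exists (lam i) => //; apply: sum_scale_supp1 => j ji.
  by apply: lamS; rewrite finset.in_set1.
exists (fun j => if j == i then mu else 0); split=> [j|]; first by case: eqP.
split=> [j|]; first by rewrite finset.in_set1 => /negbTE ->.
by rewrite (sum_scale_supp1 _ (i := i)) ?eqxx // => j /negbTE ->.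
Qed.

Lemma gconeS S T : S \subset T -> gcone v S `<=` gcone v T.
Proof.
move=> ST u [lam [lam0 [lamS ->]]]; exists lam; split=> //; split=> // i iT.
by apply: lamS; apply: contra iT; apply: (fintype.subsetP ST).
Qed.

Lemma gcone_gen S i : i \in S -> gcone v S (v i).
Proof.
rewrite -finset.sub1set => /gconeS; apply; apply/gcone1P.
by exists 1; rewrite ?scale1r.
Qed.

Lemma gcone_orthogonal S z u : (forall i, i \in S -> dotv z (v i) = 0) ->
  gcone v S u -> dotv z u = 0.
Proof.
move=> zS [lam [_ [lamS ->]]]; rewrite dotv_comb big1 // => i _.
by have [/zS ->|/lamS ->] := boolP (i \in S); rewrite (mulr0, mul0r).
Qed.

Lemma face_gcone S w : (forall i, i \in S -> dotv w (v i) <= 0) ->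
  face_of (gcone v S) (gcone v S `&` [set x | dotv w x = 0]).
Proof.
move=> wS; exists w; split=> // u [lam [lam0 [lamS ->]]].
rewrite dotv_comb sumr_le0 // => i _.
by have [/wS|/lamS ->] := boolP (i \in S); [apply: mulr_ge0_le0 | rewrite mul0r].
Qed.

Lemma face_comb_gen S w lam :
  (forall u, gcone v S u -> dotv w u <= 0) ->
  (forall i, 0 <= lam i) -> (forall i, i \notin S -> lam i = 0) ->
  dotv w (\sum_i lam i *: v i) = 0 -> forall i, lam i != 0 -> dotv w (v i) = 0.
Proof.
move=> wS lam0 lamS wlam i lami.
have iS : i \in S by apply: contraNT lami => /lamS ->.
have terms_le0 j : 0 <= - (lam j * dotv w (v j)).
  rewrite oppr_ge0; have [/gcone_gen/wS|/lamS ->] := boolP (j \in S).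
    exact: mulr_ge0_le0.
  by rewrite mul0r.
have sum0 : \sum_j - (lam j * dotv w (v j)) = 0 by rewrite sumrN -dotv_comb wlam oppr0.
have /eqP := psumr_eq0P (fun j _ => terms_le0 j) sum0 (i := i) isT.
by rewrite oppr_eq0 mulf_eq0 (negbTE lami) => /eqP.
Qed.

Lemma gcone1_scale i t (c : R) : 0 < c -> v i = c *: v t ->
  gcone v [set i] = gcone v [set t].
Proof.
move=> c0 vic; apply/seteqP; split=> u /gcone1P[mu mu0 ->]; apply/gcone1P.
  by exists (mu * c); [rewrite mulr_ge0 // ltW | rewrite vic scalerA].
by exists (mu / c); [rewrite divr_ge0 // ltW | rewrite vic scalerA mulfVK ?gt_eqF].
Qed.

Definition spanning S := forall z, (forall i, i \in S -> dotv z (v i) = 0) -> z = 0.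

Definition gens S : 'M[R]_(d, #|S|) := \matrix_(j, k) v (enum_val k) 0 j.

Definition sel S : 'M[R]_(#|S|, n) := \matrix_(k, i) (enum_val k == i)%:R.

(* The vertex with normal cone [gcone v S] of a polytope with support vector
   [h]: it solves [<x, v i> = h i] for [i \in S]. *)
Definition apex S (h : 'cV[R]_n) : 'rV[R]_d := (sel S *m h)^T *m pinvmx (gens S).

Definition apex_ineq_row S j : 'rV[R]_n :=
  v j *m (pinvmx (gens S))^T *m sel S - delta_mx 0 j.

Lemma mulmx_gens S x k : (x *m gens S) 0 k = dotv x (v (enum_val k)).
Proof. by rewrite mxE; apply: eq_bigr => j _; rewrite mxE. Qed.

Lemma sel_mul S (h : 'cV[R]_n) k : (sel S *m h) k 0 = h (enum_val k) 0.
Proof.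
rewrite mxE (bigD1 (enum_val k)) //= mxE eqxx mul1r big1 ?addr0 // => i ki.
by rewrite mxE eq_sym (negbTE ki) mul0r.
Qed.

Lemma gens_row_full S : lin_indep v S -> row_full (gens S).
Proof.
move=> Sindep; have : row_free (gens S)^T; last by rewrite /row_full -mxrank_tr.
apply/inj_row_free => c cS0; have [S0|[x0 x0S]] := set_0Vmem S.
  by apply/rowP => k; have := ltn_ord k; rewrite {2}S0 cards0.
pose r := enum_rank_in x0S; pose lam i := if i \in S then c 0 (r i) else 0.
have lamS i : i \notin S -> lam i = 0 by rewrite /lam => /negbTE ->.
have lam0 : \sum_i lam i *: v i = 0.
  apply: etrans cS0; apply/rowP => j; rewrite summxE [RHS]mxE.
  rewrite (big_enum_rank x0S (fun k => c 0 k * (gens S)^T k j)) /= -/r.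
  rewrite [RHS]big_mkcond /=; apply: eq_bigr => i _.
  rewrite mxE /lam; case: ifP => iS; last by rewrite mul0r.
  by rewrite !mxE enum_rankK_in.
apply/rowP => k; rewrite mxE; have := Sindep lam lamS lam0 (enum_val k).
by rewrite /lam enum_valP /r enum_valK_in.
Qed.

Lemma dotv_apex S h i : lin_indep v S -> i \in S -> dotv (apex S h) (v i) = h i 0.
Proof.
move=> Sindep iS; rewrite -(enum_rankK_in iS iS) -mulmx_gens.
by rewrite mulmxKpV ?submx_full ?gens_row_full // mxE sel_mul.
Qed.

Lemma apex_ineq_rowE S j h :
  (apex_ineq_row S j *m h) 0 0 = dotv (apex S h) (v j) - h j 0.
Proof.
rewrite /apex_ineq_row mulmxBl -rowE dotvC dotvE /apex.
rewrite [(_ *m pinvmx _)^T]trmx_mul trmxK !mulmxA.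
by rewrite mxE; congr (_ + _); rewrite !mxE.
Qed.

End Cones.

Section Fan.
Variables (R : realType) (d n : nat) (v : 'I_n -> 'rV[R]_d).
Variable Delta : {set {set 'I_n}}.
Hypothesis fanD : simplicial_fan v Delta.

Lemma fan_lin_indep S : S \in Delta -> lin_indep v S.
Proof. by case: fanD => _ _ + _ _; apply. Qed.

Lemma fan_gen_neq0 i : v i != 0.
Proof.
apply/eqP => vi0; case: fanD => _ _ fan_indep fan_rays _.
have supp1 j : j \notin [set i]%SET -> (j == i)%:R = 0 :> R.
  by rewrite finset.in_set1 => /negbTE ->.
have sum0 : \sum_j (j == i)%:R *: v j = 0.
  by rewrite (sum_scale_supp1 _ (i := i)) => [|j /negbTE ->//]; rewrite vi0 scaler0.
by have /eqP := fan_indep _ (fan_rays i) _ supp1 sum0 i; rewrite eqxx oner_eq0.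
Qed.

(* [gcone [set t] `&` gcone S] is a face of [gcone S] containing [v t]; the
   generators of [S] it contains span rays equal to that of [v t]. *)
Lemma fan_ray_mem S t : S \in Delta -> gcone v S (v t) -> t \in S.
Proof.
move=> SD [lam [lam0 [lamS vtE]]].
case: fanD => _ fan_meet _ fan_rays fan_rays_inj.
have [_ [w [wS wE]]] := fan_meet _ _ (fan_rays t) SD.
have [_ vtw] : (gcone v S `&` [set x | dotv w x = 0]) (v t).
  by rewrite -wE; split; [apply: gcone_gen; rewrite finset.in_set1 | exists lam].
have [i lami] : exists i, lam i != 0.
  have [//|/forallNP lam_eq0] := pselect (exists i, lam i != 0).
  move: (fan_gen_neq0 t); rewrite vtE big1 ?eqxx // => i _.
  by have [->|/lam_eq0[]] := eqVneq (lam i) 0; rewrite scale0r.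
have iS : i \in S by apply: contraNT lami => /lamS ->.
have wi : dotv w (v i) = 0 by apply: face_comb_gen wS lam0 lamS _ _ lami; rewrite -vtE.
have [/gcone1P[c c0 vic] _] : (gcone v [set t] `&` gcone v S) (v i).
  by rewrite wE; split=> //; apply: gcone_gen.
have c_gt0 : 0 < c.
  rewrite lt_def c0 andbT; apply: contra (fan_gen_neq0 i) => /eqP c_eq0.
  by rewrite vic c_eq0 scale0r.
by rewrite -(fan_rays_inj _ _ (gcone1_scale c_gt0 vic)).
Qed.

(* Maximise the relative-interior point [\sum_(i in S) v i] of [gcone v S].
   The cone of [Delta] containing it inside the normal cone meets [gcone v S]
   in a face containing that point, hence in all of [gcone v S]. *)
Lemma coarsening_normal_cone pts S : pts != [::] -> coarsens v Delta (conv pts) ->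
  S \in Delta -> exists2 x, conv pts x & gcone v S `<=` normal_cone (conv pts) x.
Proof.
move=> pts0 coarse SD; pose lam i : R := (i \in S)%:R.
have [x cx xmax] := conv_maximizer (\sum_i lam i *: v i) pts0.
exists x => //; have [F [FD NxE]] := coarse _ (ex_intro2 _ _ x cx erefl).
rewrite NxE in xmax; case: xmax => T TF wT.
case: fanD => _ fan_meet _ _ _.
have [[w [wS wE]] _] := fan_meet _ _ SD (fintype.subsetP FD T TF).
have lamS i : i \notin S -> lam i = 0 by rewrite /lam => /negbTE ->.
have [_ ww] : (gcone v S `&` [set u | dotv w u = 0]) (\sum_i lam i *: v i).
  by rewrite -wE; split=> //; exists lam; split=> // i; rewrite ler0n.
have wSv i : i \in S -> dotv w (v i) = 0.
  move=> iS; apply: face_comb_gen wS _ lamS ww _ _ => [j|]; first by rewrite ler0n.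
  by rewrite /lam iS oner_neq0.
move=> u uS; have : (gcone v S `&` [set u | dotv w u = 0]) u.
  by split=> //; apply: gcone_orthogonal wSv uS.
by rewrite -wE NxE => -[_ uT]; exists T.
Qed.

Lemma suppf_comb pts S (lam : 'I_n -> R) : pts != [::] ->
  coarsens v Delta (conv pts) -> S \in Delta ->
  (forall i, 0 <= lam i) -> (forall i, i \notin S -> lam i = 0) ->
  suppf (conv pts) (\sum_i lam i *: v i) = \sum_i lam i * suppf (conv pts) (v i).
Proof.
move=> pts0 coarse SD lam0 lamS.
have [x cx Sx] := coarsening_normal_cone pts0 coarse SD.
have suppfS u : gcone v S u -> suppf (conv pts) u = dotv x u.
  by move=> /Sx; apply: suppf_normal.
rewrite suppfS; last by exists lam.
rewrite dotv_comb; apply: eq_bigr => i _.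
by have [/gcone_gen/suppfS ->|/lamS ->] := boolP (i \in S); rewrite ?mul0r.
Qed.

Hypothesis polyD : polytopal v Delta.

(* The normal cone of a vertex exposed by [strict_maximizer] contains a
   neighbourhood of the exposing direction. *)
Lemma spanning_cover u : exists S, [/\ S \in Delta, spanning v S & gcone v S u].
Proof.
have [pts pts0 fanE] := polyD.
have [p [g [pin pu pg]]] := strict_maximizer u pts0.
have [S SD NpE] : exists2 S, S \in Delta & normal_cone (conv pts) p = gcone v S.
  have : normal_fan (conv pts) (normal_cone (conv pts) p).
    by exists p => //; apply: conv_mem.
  by rewrite fanE => -[S SD ->]; exists S.
exists S; split=> //; last by rewrite -NpE; apply: normal_cone_conv.
move=> z zS; have [e e0] := normal_cone_perturb z pin pg.
have : normal_cone (conv pts) p g.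
  by apply: normal_cone_conv => q qin; have [->//|/(pg q qin)/ltW] := eqVneq q p.
rewrite NpE => /(gcone_orthogonal zS) zg /(gcone_orthogonal zS).
rewrite dotvDr dotvZr zg add0r => /eqP; rewrite mulf_eq0 gt_eqF //=.
by rewrite dotvv_eq0 => /eqP.
Qed.

(* The support [T] of the coordinates of [u] in a spanning cone [gcone v S] is
   itself a cone of [Delta]: it is the face of [gcone v S] cut out by a
   functional vanishing exactly on the generators indexed by [T]. *)
Lemma coords_exists u : exists lam, is_coords v Delta u lam.
Proof.
have [S [SD _ [lam [lam0 [lamS uE]]]]] := spanning_cover u.
pose T := [set i | 0 < lam i]%SET.
have TS i : i \in T -> i \in S.
  by rewrite finset.inE; apply: contraTT => /lamS ->; rewrite ltxx.
pose w := apex v S (\col_i (if i \in T then 0 else -1)).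
have wv i : i \in S -> dotv w (v i) = if i \in T then 0 else -1.
  by move=> iS; rewrite dotv_apex ?mxE //; apply: fan_lin_indep.
have wS i : i \in S -> dotv w (v i) <= 0.
  by move=> /wv ->; case: ifP; rewrite // lerN10.
case: fanD => face_closed _ _ _ _.
have [T' T'D T'E] := face_closed S SD _ (face_gcone wS).
have TT' : T = T'.
  apply/setP => i; apply/idP/idP => [iT|iT'].
    apply: (fan_ray_mem T'D); rewrite -T'E; split; first exact/gcone_gen/TS.
    by rewrite /= wv ?TS // iT.
  have [/(fan_ray_mem SD) iS /=] : (gcone v S `&` [set x | dotv w x = 0]) (v i).
    by rewrite T'E; apply: gcone_gen.
  by rewrite wv //; case: ifP => // _ /eqP; rewrite oppr_eq0 oner_eq0.
exists (\col_i lam i), T; first by rewrite TT'.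
split=> [i|i|].
- by rewrite mxE finset.inE.
- by rewrite mxE finset.inE -leNgt => lam_le0; apply/eqP; rewrite eq_le lam_le0 lam0.
- by rewrite uE; apply: eq_bigr => i _; rewrite mxE.
Qed.

Lemma coordsP u : is_coords v Delta u (coords v Delta u).
Proof. exact: epsilon_spec (coords_exists u). Qed.

Lemma AU_supvec pts m (U : 'I_m -> 'rV[R]_d) k : pts != [::] ->
  coarsens v Delta (conv pts) ->
  (AU v Delta U *m supvec v (conv pts)) k 0 = suppf (conv pts) (U k).
Proof.
move=> pts0 coarse; have [S SD [lam_pos lam0 Uk]] := coordsP (U k).
rewrite [in RHS]Uk (suppf_comb pts0 coarse SD) // => [|i].
  by rewrite mxE; apply: eq_bigr => i _; rewrite !mxE.
by have [/lam_pos/ltW|/lam0 ->] := boolP (i \in S).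
Qed.

Lemma ls_objE m (U : 'I_m -> 'rV[R]_d) (y : 'cV[R]_m) pts :
  in_defcone v Delta pts ->
  ls_obj U y (conv pts) =
    m%:R^-1 * sqnorm (AU v Delta U *m supvec v (conv pts) - y).
Proof.
move=> [pts0 coarse]; congr (_ * _); apply: eq_bigr => k _.
by rewrite !mxE -(AU_supvec U k pts0 coarse) mxE.
Qed.

Lemma lse_argmin m (U : 'I_m -> 'rV[R]_d) (y : 'cV[R]_m) :
  lse v Delta U y = [set h | defcone v Delta h /\ forall h', defcone v Delta h' ->
     enorm (AU v Delta U *m h - y) <= enorm (AU v Delta U *m h' - y)].
Proof.
apply/seteqP; split=> h.
  move=> [pts [ptsD -> ptsmin]]; split=> [|h' [pts' pts'D <-]]; first by exists pts.
  have := ptsmin pts' pts'D; rewrite !ls_objE //.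
  have [m0 _|m_gt0] := posnP m; first by subst m; rewrite /enorm /sqnorm !big_ord0.
  by rewrite ler_pM2l ?invr_gt0 ?ltr0n // -ler_enorm.
move=> [[pts ptsD <-] hmin]; exists pts; split=> // pts' pts'D.
rewrite !ls_objE // ler_wpM2l ?invr_ge0 ?ler0n // -ler_enorm.
by apply: hmin; exists pts'.
Qed.

Definition defcone_ineq (h : 'cV[R]_n) := forall S, S \in Delta -> spanning v S ->
  forall j, dotv (apex v S h) (v j) <= h j 0.

Lemma defcone_ineqs h : defcone v Delta h -> defcone_ineq h.
Proof.
move=> [pts [pts0 coarse] <-] S SD Sspan j; have Sindep := fan_lin_indep SD.
have [x cx Sx] := coarsening_normal_cone pts0 coarse SD.
have -> : apex v S (supvec v (conv pts)) = x.
  apply/eqP; rewrite -subr_eq0; apply/eqP/Sspan => i iS.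
  rewrite dotvBl dotv_apex // mxE.
  by rewrite (suppf_normal cx (Sx _ (gcone_gen v iS))) subrr.
by rewrite mxE; apply: suppf_ge.
Qed.

Definition apex_pts (h : 'cV[R]_n) : seq 'rV[R]_d :=
  [seq apex v Z h | Z <- enum [set Z in Delta | `[< spanning v Z >]]%SET].

Lemma apex_ptsP h y : y \in apex_pts h ->
  exists2 S, S \in Delta /\ spanning v S & y = apex v S h.
Proof.
move=> /mapP[S]; rewrite mem_enum finset.inE => /andP[SD /asboolP Sspan] ->.
by exists S.
Qed.

Lemma apex_pts_mem h S : S \in Delta -> spanning v S -> apex v S h \in apex_pts h.
Proof.
by move=> SD Sspan; apply: map_f; rewrite mem_enum finset.inE SD; apply/asboolP.
Qed.

Lemma apex_pts_neq0 h : apex_pts h != [::].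
Proof.
have [S [SD Sspan _]] := spanning_cover 0.
by apply/eqP => pts0; move: (apex_pts_mem h SD Sspan); rewrite pts0.
Qed.

Section ApexPolytope.
Variable h : 'cV[R]_n.
Hypothesis hD : defcone_ineq h.

Lemma conv_apex_le y j : conv (apex_pts h) y -> dotv y (v j) <= h j 0.
Proof. by move=> cy; apply: conv_le cy _ => q /apex_ptsP[S [SD Sspan] ->]; apply: hD. Qed.

Lemma conv_apex_le_cone y S u : conv (apex_pts h) y -> S \in Delta ->
  gcone v S u -> dotv y u <= dotv (apex v S h) u.
Proof.
move=> cy SD [lam [lam0 [lamS ->]]]; rewrite !dotv_comb; apply: ler_sum => i _.
have [iS|/lamS ->] := boolP (i \in S); last by rewrite !mul0r.
rewrite dotv_apex //; last exact: fan_lin_indep.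
by apply: ler_wpM2l => //; apply: conv_apex_le.
Qed.

Lemma supvec_apex : supvec v (conv (apex_pts h)) = h.
Proof.
apply/matrixP => j k; rewrite (ord1 k) mxE.
have [S [SD Sspan vjS]] := spanning_cover (v j).
have apexj : dotv (apex v S h) (v j) = h j 0.
  by rewrite dotv_apex ?(fan_ray_mem SD) //; apply: fan_lin_indep.
have capex : conv (apex_pts h) (apex v S h) by apply/conv_mem/apex_pts_mem.
by rewrite (suppf_normal capex) // => y cy; rewrite apexj conv_apex_le.
Qed.

(* A direction [u] normal at [x] lies in a spanning cone [gcone v S]; the face
   of [gcone v S] on which [x] and [apex v S h] agree contains [u] and is
   normal at [x]. *)
Lemma coarsens_apex : coarsens v Delta (conv (apex_pts h)).
Proof.
move=> C [x cx ->].
exists [set T in Delta | `[< gcone v T `<=` normal_cone (conv (apex_pts h)) x >]]%SET.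
split; first by apply/fintype.subsetP => T; rewrite finset.inE => /andP[].
apply/seteqP; split=> u; last first.
  by move=> [T]; rewrite finset.inE => /andP[_ /asboolP]; apply.
move=> xu; have [S [SD Sspan uS]] := spanning_cover u.
have capex : conv (apex_pts h) (apex v S h) by apply/conv_mem/apex_pts_mem.
have wS i : i \in S -> dotv (x - apex v S h) (v i) <= 0.
  by move=> iS; rewrite dotvBl subr_le0; apply: conv_apex_le_cone (gcone_gen v iS).
case: fanD => face_closed _ _ _ _.
have [T TD TE] := face_closed _ SD _ (face_gcone wS).
exists T; last first.
  rewrite -TE; split=> //=; rewrite dotvBl; apply/eqP; rewrite subr_eq0 eq_le.
  by rewrite conv_apex_le_cone //=; apply: xu.
rewrite finset.inE TD; apply/asboolP => u'; rewrite -TE => -[u'S /= /eqP].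
by rewrite dotvBl subr_eq0 => /eqP xu' y cy; rewrite xu' conv_apex_le_cone.
Qed.

End ApexPolytope.

Lemma defcone_of_ineq h : defcone_ineq h -> defcone v Delta h.
Proof.
move=> hD; exists (apex_pts h); last exact: supvec_apex.
by split; [apply: apex_pts_neq0 | apply: coarsens_apex].
Qed.

Lemma defcone_polyhedral : exists k (C : 'M[R]_(k, n)),
  defcone v Delta = [set h | forall r, (C *m h) r 0 <= 0].
Proof.
pose I := ({set 'I_n} * 'I_n)%type.
pose active (Sj : I) := (Sj.1 \in Delta) && `[< spanning v Sj.1 >].
pose C := \matrix_(r < #|{: I}|, i < n)
  (if active (enum_val r) then apex_ineq_row v (enum_val r).1 (enum_val r).2 0 i else 0).
have CE (h : 'cV_n) r : (C *m h) r 0 = if active (enum_val r) then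
    dotv (apex v (enum_val r).1 h) (v (enum_val r).2) - h (enum_val r).2 0 else 0.
  rewrite mxE; case: ifP => act; last by rewrite big1 // => i _; rewrite mxE act mul0r.
  by rewrite -apex_ineq_rowE mxE; apply: eq_bigr => i _; rewrite mxE act.
exists #|{: I}|, C; apply/seteqP; split=> h.
  move=> /defcone_ineqs hD r; rewrite /= CE; case: ifP => // /andP[SD /asboolP Sspan].
  by rewrite subr_le0; apply: hD.
move=> hC; apply: defcone_of_ineq => S SD Sspan j.
have := hC (enum_rank (S, j)); rewrite CE enum_rankK /active SD /=.
by case: asboolP => // _; rewrite subr_le0.
Qed.

End Fan.

Unset Implicit Arguments.

Theorem theorem3p1 (R : realType) (d n m : nat) (v : 'I_n -> 'rV[R]_d)
  (Delta : {set {set 'I_n}}) (U : 'I_m -> 'rV[R]_d) (y : 'cV[R]_m) :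
  simplicial_fan v Delta -> polytopal v Delta ->
  let A := AU v Delta U in
  let D := defcone v Delta in
  let ismin := fun z : 'cV[R]_m =>
    (exists2 h, D h & z = A *m h) /\
    (forall h, D h -> enorm (z - y) <= enorm (A *m h - y)) in
  [/\ lse v Delta U y =
        [set h | D h /\ forall h', D h' -> enorm (A *m h - y) <= enorm (A *m h' - y)],
      (exists yh, ismin yh) /\ (forall z1 z2, ismin z1 -> ismin z2 -> z1 = z2),
      (forall yh, ismin yh -> lse v Delta U y = D `&` [set h | A *m h = yh]) &
      (exists h, lse v Delta U y h) /\ polyhedron (lse v Delta U y)].
Proof.
move=> fanD polyD A D ismin.
have [k [C DE]] := defcone_polyhedral fanD polyD.
have Dmid h1 h2 : D h1 -> D h2 -> D (2^-1 *: (h1 + h2)).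
  rewrite /D DE /= => Ch1 Ch2 r; rewrite -scalemxAr mulmxDr [X in X <= _]mxE.
  by rewrite mxE pmulr_rle0 ?invr_gt0 ?ltr0n //; have := Ch1 r; have := Ch2 r; lra.
have [h0 Dh0 h0min] : exists2 h0, D h0 &
    forall h, D h -> enorm (A *m h0 - y) <= enorm (A *m h - y).
  rewrite /D DE; have [h0 Ch0 h0min] := cone_lsq_min_exists C A y.
  by exists h0 => // h Ch; rewrite ler_enorm h0min.
have min_unique z1 z2 : ismin z1 -> ismin z2 -> z1 = z2.
  move=> [[h1 Dh1 ->] min1] [[h2 Dh2 ->] min2].
  apply: (lsq_min_image_unique (y := y) Dmid) => // h Dh;
    rewrite -ler_enorm; [exact: min1 | exact: min2].
have lse_fibre yh : ismin yh -> lse v Delta U y = D `&` [set h | A *m h = yh].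
  move=> yh_min; rewrite lse_argmin //; apply/seteqP; split=> h /=.
    by move=> [Dh hmin]; split=> //; apply: min_unique yh_min; split=> //; exists h.
  by move=> [Dh ->]; split=> // h'; apply: yh_min.2.
have yh0_min : ismin (A *m h0) by split=> //; exists h0.
split=> //; first exact: lse_argmin.
- by split=> //; exists (A *m h0).
- rewrite (lse_fibre _ yh0_min); split; first by exists h0.
  by rewrite /D DE; apply: polyhedron_cone_fibre.
Qed.
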